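(* For every NFA $\mathcal A$, the relation $S(\subseteq^{\mathrm{bw}},\supseteq^{\mathrm{bw}})$ is good for saturation, i.e. $\mathcal L(\mathrm{Sat}(\mathcal A,S(\subseteq^{\mathrm{bw}},\supseteq^{\mathrm{bw}})))=\mathcal L(\mathcal A)$.
   Context: An NFA $\mathcal A=(\Sigma,Q,I,F,\delta)$, $\delta\subseteq Q\times\Sigma\times Q$; its language is the set of finite words with a finite trace starting in $I$ and ending in $F$. Backward finite trace inclusion: $p\subseteq^{\mathrm{bw}}q$ iff for every finite word $w$, if some $w$-trace starting in $I$ ends in $p$, then some $w$-trace starting in $I$ ends in $q$; $\supseteq^{\mathrm{bw}}$ is its inverse. Let $\Delta=Q\times\Sigma\times Q$; $S(R_b,R_f)=\{((p,\sigma,r),(p',\sigma,r'))\in\Delta\times\Delta:p\,R_b\,p',\ r\,R_f\,r'\}$. For reflexive $S\subseteq\Delta\times\Delta$, $\mathrm{Sat}(\mathcal A,S)=(\Sigma,Q,I,F,\{t'\in\Delta:\exists t\in\delta,(t',t)\in S\})$. *)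

From mathcomp Require Import all_boot.
Set Implicit Arguments. Unset Strict Implicit. Unset Printing Implicit Defensive.

Record NFA (Sigma Q : finType) := mkNFA {
  init : {set Q};
  final : {set Q};
  delta : Q * Sigma * Q -> Prop }.

Fixpoint run (Sigma Q : finType) (d : Q * Sigma * Q -> Prop) (p : Q) (w : seq Sigma) (q : Q) : Prop :=
  match w with
  | [::] => p = q
  | a :: w' => exists r, d (p, a, r) /\ run d r w' q
  end.

Definition lang (Sigma Q : finType) (A : NFA Sigma Q) (w : seq Sigma) : Prop :=
  exists p q, p \in init A /\ q \in final A /\ run (delta A) p w q.

Definition bw_incl (Sigma Q : finType) (A : NFA Sigma Q) (p q : Q) : Prop :=
  forall w : seq Sigma,
    (exists i, i \in init A /\ run (delta A) i w p) ->
    (exists i, i \in init A /\ run (delta A) i w q).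

Definition bw_sup (Sigma Q : finType) (A : NFA Sigma Q) (p q : Q) : Prop :=
  bw_incl A q p.

Definition Srel (Sigma Q : finType) (Rb Rf : Q -> Q -> Prop)
  (t t' : Q * Sigma * Q) : Prop :=
  let: (p, s, r) := t in let: (p', s', r') := t' in
  s = s' /\ Rb p p' /\ Rf r r'.

Definition Sat (Sigma Q : finType) (A : NFA Sigma Q)
  (S : Q * Sigma * Q -> Q * Sigma * Q -> Prop) : NFA Sigma Q :=
  mkNFA (init A) (final A)
    (fun t' => exists2 t, delta A t & S t' t).

From mathcomp Require Import all_boot.

Set Implicit Arguments.
Unset Strict Implicit.
Unset Printing Implicit Defensive.

(* Saturation only adds transitions, so one inclusion is immediate.  For the
   other, every state [q] reached in the saturated automaton by [w] is also
   reached by [w] in [A]: a saturated step [(p, a, r)] is witnessed by an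
   [A]-step [(p', a, r')] with [p] backward-included in [p'] and [r'] in [r],
   so reachability of [p] transfers to [p'], then to [r'], then to [r]. *)

Lemma run_rcons (Sigma Q : finType) (d : Q * Sigma * Q -> Prop) p u m a r :
  run d p u m -> d (m, a, r) -> run d p (rcons u a) r.
Proof.
elim: u p => [|b u IHu] p /=; first by move=> ->; exists r.
by move=> [x [dpx runx]] dmr; exists x; split => //; apply: IHu.
Qed.

Lemma run_sub (Sigma Q : finType) (d d' : Q * Sigma * Q -> Prop) p w q :
  (forall t, d t -> d' t) -> run d p w q -> run d' p w q.
Proof.
move=> dd'; elim: w p => [|a w IHw] p //= [x [dpx runx]].
by exists x; split; [apply: dd' | apply: IHw].
Qed.

Section Saturation.

Variables (Sigma Q : finType) (A : NFA Sigma Q).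

Definition reachable (w : seq Sigma) (q : Q) : Prop :=
  exists i, i \in init A /\ run (delta A) i w q.

Lemma reachable_rcons u p a r :
  reachable u p -> delta A (p, a, r) -> reachable (rcons u a) r.
Proof. by move=> [i [iA runi]] dpr; exists i; split => //; apply: run_rcons dpr. Qed.

Lemma bw_incl_refl p : bw_incl A p p.
Proof. by move=> w. Qed.

Lemma delta_sub_Sat (S : Q * Sigma * Q -> Q * Sigma * Q -> Prop) :
  (forall t, S t t) -> forall t, delta A t -> delta (Sat A S) t.
Proof. by move=> reflS t dt /=; exists t. Qed.

Variables (Rb Rf : Q -> Q -> Prop).
Hypothesis Rb_bw_incl : forall p p', Rb p p' -> bw_incl A p p'.
Hypothesis Rf_bw_sup : forall r r', Rf r r' -> bw_sup A r r'.

Let satA := Sat A (Srel Rb Rf).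

Lemma reachable_Sat_step u p a r :
  reachable u p -> delta satA (p, a, r) -> reachable (rcons u a) r.
Proof.
move=> reach_p [[[p' b] r'] dA /= [-> [Rpp' Rrr']]].
have reach_p' : reachable u p' by exact: Rb_bw_incl Rpp' u reach_p.
exact: Rf_bw_sup Rrr' _ (reachable_rcons reach_p' dA).
Qed.

Lemma reachable_Sat_run w : forall u p q,
  reachable u p -> run (delta satA) p w q -> reachable (u ++ w) q.
Proof.
elim: w => [|a w IHw] u p q reach_p /=; first by move=> <-; rewrite cats0.
move=> [r [dpr runr]]; rewrite -cat_rcons.
by apply: IHw runr; apply: reachable_Sat_step dpr.
Qed.

Lemma lang_Sat_sub w : lang satA w -> lang A w.
Proof.
move=> [p [q [pI [qF runpq]]]].
have [i [iI runiq]] : reachable w q.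
  by apply: (@reachable_Sat_run w [::] p) => //; exists p.
by exists i, q.
Qed.

End Saturation.

Theorem theorem10p8 (Sigma Q : finType) (A : NFA Sigma Q) :
  forall w : seq Sigma,
    lang (Sat A (Srel (bw_incl A) (bw_sup A))) w <-> lang A w.
Proof.
move=> w; split; first by apply: lang_Sat_sub.
move=> [p [q [pI [qF runpq]]]]; exists p, q; do 2!split => //.
apply: run_sub runpq; apply: delta_sub_Sat => -[[x a] y] /=.
by do 2!split => //; apply: bw_incl_refl.
Qed.
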